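(* For every integer $r$ there exists an integer $k=k(r)$ such that the following holds. If $G$ is a bipartite graph with bipartition $(X,Y)$ and $\eta_G(m)\le r\cdot m$ for every positive integer $m$, then $Y$ can be colored with $k$ colors such that for every non-isolated vertex $v\in X$ there exists a color which appears an odd number of times in $N(v)$.
   Context: $N(v)$ is the open neighborhood of $v$. The neighborhood complexity of $G$ is $\eta_G(m)=\max_A|\{N(v)\cap A: v\in V(G)\}|$ over all $m$-element subsets $A\subseteq V(G)$. The coloring of $Y$ need not be proper. *)

From mathcomp Require Import all_boot.
Set Implicit Arguments. Unset Strict Implicit. Unset Printing Implicit Defensive.

Definition simple_graph (T : finType) (e : rel T) : Prop :=
  symmetric e /\ irreflexive e.

Definition nbhd (T : finType) (e : rel T) (v : T) : {set T} := [set u | e v u].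

Definition bipartition (T : finType) (e : rel T) (X Y : {set T}) : Prop :=
  [/\ X :&: Y = set0, X :|: Y = setT &
      forall u v, e u v -> (u \in X /\ v \in Y) \/ (u \in Y /\ v \in X)].

(* Neighbourhood complexity eta_G(m) = max over m-element A of
   #|{N(v) :&: A : v in V(G)}| (0 if there is no m-element subset). *)
Definition eta (T : finType) (e : rel T) (m : nat) : nat :=
  \max_(A : {set T} | #|A| == m) #|[set nbhd e v :&: A | v : T]|.

(* Color the set P (eventually Y) by induction on |P|, keeping every nonempty
   trace N(v) :&: P odd for some color.  If |P| <= k color injectively.
   Otherwise P contains near twins y <> w: no trace equals {y, w}, and the
   vertices separating y from w have fewer than k distinct traces on P.  Color
   P minus {y, w} by induction and give y and w one common color a that differs
   from a chosen odd color of each separating trace: a vertex seeing both or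
   neither of y, w keeps its parities, a vertex seeing exactly one keeps its
   chosen odd color, and a vertex whose trace lies in {y, w} sees a once.

   Near twins exist because the linear bound on traces (eta(m) <= r m) makes
   the graph of two-element traces on P have average degree at most 2r, so it
   has a stable set I with |P| <= (2r+1)|I|.  On a transversal R of the traces,
   the sets N(y) :&: R (y in I) again have linearly many traces, hence VC
   dimension at most r + 3, and Haussler's packing argument (the one-inclusion
   graph has edge density at most the VC dimension, averaged over random
   subsets of R) forces two of them to be closer than k = 16 (r + 3)^4. *)

From mathcomp Require Import all_boot zify.
Set Implicit Arguments. Unset Strict Implicit. Unset Printing Implicit Defensive.

Lemma card_sep_sum (T : finType) (A : {set T}) (P : pred T) :
  #|[set x in A | P x]| = \sum_(x in A) P x.
Proof. by rewrite -sum1dep_card big_mkcondr; apply: eq_bigr => x _; case: (P x). Qed.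

Lemma setU1I_notin (T : finType) (A B : {set T}) z :
  z \notin B -> (z |: A) :&: B = A :&: B.
Proof.
move=> zB; apply/setP => x; rewrite !inE.
by case: eqVneq => [->|] //=; rewrite (negbTE zB) andbF.
Qed.

Lemma setI_setU1 (T : finType) (A B : {set T}) z :
  A :&: (z |: B) = if z \in A then z |: (A :&: B) else A :&: B.
Proof.
case: ifPn => zA; apply/setP => x; rewrite !inE;
  by case: eqVneq => [->|] //=; rewrite ?zA ?(negbTE zA).
Qed.

Lemma card_setI2 (T : finType) (A : {set T}) y w : y != w ->
  #|A :&: [set y; w]| = (y \in A) + (w \in A).
Proof.
move=> yw; have -> : A :&: [set y; w] = [set x in [set y; w] | x \in A].
  by apply/setP => x; rewrite !inE andbC.
by rewrite card_sep_sum big_setU1 ?big_set1 // inE.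
Qed.

Lemma setI_splitD (T : finType) (A P D : {set T}) : D \subset P ->
  A :&: P = (A :&: (P :\: D)) :|: (A :&: D).
Proof.
move=> sDP; apply/setP => x; rewrite !inE.
by case: (boolP (x \in D)) => xD; rewrite ?(subsetP sDP x xD) /= ?andbT ?andbF ?orbF ?orbT.
Qed.

Lemma sq_le_pow2 n : 4 <= n -> n * n <= 2 ^ n.
Proof.
elim: n => // n IH; rewrite ltnS leq_eqVlt => /predU1P[<- // | n4].
by have := IH n4; rewrite expnS; nia.
Qed.

Lemma le_of_pow2_le_linear r n : 2 ^ n <= r * n -> n <= r + 3.
Proof.
have [n3 | n4] := leqP n 3; first by lia.
by have := sq_le_pow2 n4; nia.
Qed.

Section WeightedEdges.
Variable Q : finType.
Implicit Types (A S T U : {set Q}) (w : {set Q} -> nat).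

Lemma big_powersetD1 (R : Type) (idx : R) (op : Monoid.com_law idx)
    A z (f : {set Q} -> R) : z \in A ->
  \big[op/idx]_(S in powerset A) f S =
  \big[op/idx]_(S in powerset (A :\ z)) op (f S) (f (z |: S)).
Proof.
move=> zA; rewrite big_split (bigID (fun S => z \in S)) /= Monoid.mulmC.
congr (op _ _); first by apply: eq_bigl => S; rewrite !inE subsetD1.
rewrite (reindex_onto (fun S => z |: S) (fun S => S :\ z)) /=; last first.
  by move=> S /andP[_ zS]; rewrite setD1K.
apply: eq_bigl => S; rewrite !inE subsetD1 eqxx /= andbT.
apply/andP/andP => [[sA /eqP <-] | [sA zS]].
  by rewrite (subset_trans (subD1set _ _) sA) !inE eqxx.
by rewrite setU1K // eqxx subUset sub1set zA.
Qed.

Definition shattered_by w S :=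
  forall U, U \subset S -> exists2 T, 0 < w T & T :&: S = U.

Definition total_weight A w := \sum_(S in powerset A) w S.

(* The weighted edge count of the one-inclusion graph on the subsets of [A]. *)
Definition edge_weight A w :=
  \sum_(u in A) \sum_(S in powerset (A :\ u)) minn (w S) (w (u |: S)).

Definition split_max w A z T :=
  if T \subset A :\ z then maxn (w T) (w (z |: T)) else 0.

Definition split_min w A z T :=
  if T \subset A :\ z then minn (w T) (w (z |: T)) else 0.

Lemma total_weight_split w A z : z \in A ->
  total_weight A w =
  total_weight (A :\ z) (split_max w A z) + total_weight (A :\ z) (split_min w A z).
Proof.
move=> zA; rewrite /total_weight (big_powersetD1 _ _ zA) -big_split.
apply: eq_bigr => T; rewrite inE /split_max /split_min => -> /=; lia.
Qed.

Lemma edge_weight_split w A z : z \in A ->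
  edge_weight A w <= total_weight (A :\ z) (split_min w A z) +
    (edge_weight (A :\ z) (split_max w A z) + edge_weight (A :\ z) (split_min w A z)).
Proof.
move=> zA; rewrite /edge_weight (bigD1 z zA) /=; apply: leq_add.
  by apply: eq_leq; apply: eq_bigr => T; rewrite inE /split_min => ->.
rewrite (eq_bigl (mem (A :\ z))); last by move=> u; rewrite !inE andbC.
rewrite -big_split /=; apply: leq_sum => u; rewrite !inE => /andP[uz uA].
have zAu : z \in A :\ u by rewrite !inE eq_sym uz.
rewrite (big_powersetD1 _ _ zAu) -big_split /= [A :\ u :\ z]setDDl setUC -setDDl.
apply: leq_sum => T; rewrite inE => sT.
have sTA : T \subset A :\ z by apply: subset_trans sT (subD1set _ _).
have suTA : u |: T \subset A :\ z.
  by rewrite subUset sub1set !inE uz uA (subset_trans sT) // subsetDl.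
rewrite /split_max /split_min sTA suTA setUCA; lia.
Qed.

Lemma shattered_split_max w A z S : S \subset A :\ z ->
  shattered_by (split_max w A z) S -> shattered_by w S.
Proof.
move=> /subsetD1P[_ zS] shS U /shS[T]; rewrite /split_max; case: ifP => // _ wT <-.
have [wT0 | ] := posnP (w T); last by exists T.
by exists (z |: T); [lia | rewrite setU1I_notin].
Qed.

Lemma shattered_split_min w A z S :
  shattered_by (split_min w A z) S -> shattered_by w (z |: S).
Proof.
move=> shS U sU; have /shS[T] : U :\ z \subset S by rewrite subDset.
rewrite /split_min; case: ifP => // /subsetD1P[_ zT] wT TS.
have [zU | zU] := boolP (z \in U).
  by exists (z |: T); [lia | rewrite -setUIr TS setD1K].
exists T; first by lia.
by rewrite setIC setU1I_notin // setIC TS; apply/setDidPl; rewrite disjoint_sym disjoints1.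
Qed.

(* Haussler's shifting argument: split along [z]; the maximum part shatters only
   sets shattered by [w], the minimum part only sets whose extension by [z] is. *)
Lemma edge_weight_le w A d :
  (forall S, S \subset A -> shattered_by w S -> #|S| <= d) ->
  edge_weight A w <= d * total_weight A w.
Proof.
have [n] := ubnP #|A|; elim: n A w d => // n IH A w d cA vcA.
have [->|[z zA]] := set_0Vmem A; first by rewrite /edge_weight big_set0.
have cAz : #|A :\ z| < n by move: cA; rewrite (cardsD1 z) zA.
have IHmax : edge_weight (A :\ z) (split_max w A z) <=
             d * total_weight (A :\ z) (split_max w A z).
  apply: IH => // S sS /(shattered_split_max sS); apply: vcA.
  exact: subset_trans sS (subD1set _ _).
have vc_min S : S \subset A :\ z -> shattered_by (split_min w A z) S -> #|S| < d.
  move=> sS /shattered_split_min /vcA; rewrite cardsU1 (contra (subsetP sS z)) ?setD11 //.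
  by apply; rewrite subUset sub1set zA (subset_trans sS) ?subD1set.
have IHmin : edge_weight (A :\ z) (split_min w A z) <=
             d.-1 * total_weight (A :\ z) (split_min w A z).
  by apply: IH => // S sS /(vc_min S sS); case: d {vcA IHmax vc_min}.
have min_pos : 0 < total_weight (A :\ z) (split_min w A z) -> 0 < d.
  rewrite lt0n sum_nat_eq0 negb_forall => /existsP[T]; rewrite negb_imply -lt0n.
  case/andP=> _ wT; rewrite -(cards0 Q); apply: vc_min (sub0set _) _ => U.
  by rewrite subset0 => /eqP->; exists T; rewrite ?setI0.
rewrite (total_weight_split w zA); apply: leq_trans (edge_weight_split w zA) _.
case: d min_pos IHmax IHmin {vcA vc_min} => [|d] min_pos IHmax IHmin /=.
  by rewrite !mul0n in IHmax IHmin *; lia.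
by rewrite mulnDr [d.+1 * _ in X in _ <= _ + X]mulSn; lia.
Qed.

End WeightedEdges.

Section TraceFamily.
Variables (J Q : finType) (F : J -> {set Q}).
Implicit Types (B S T : {set Q}) (C : {set J}).

Lemma sum_disagree C z :
  \sum_(y in C) #|[set y' in C | (z \in F y) != (z \in F y')]| =
  2 * (#|[set y in C | z \notin F y]| * #|[set y in C | z \in F y]|).
Proof.
set a := #|[set y in C | z \notin F y]|; set b := #|[set y in C | z \in F y]|.
rewrite (bigID (fun y => z \in F y)) /=.
rewrite (eq_bigr (fun=> a)) => [|y /andP[_ zy]]; last first.
  by apply: eq_card => y'; rewrite !inE zy.
rewrite [X in _ + X](eq_bigr (fun=> b)) => [|y /andP[_ /negbTE zy]]; last first.
  by apply: eq_card => y'; rewrite !inE zy; case: (z \in F y').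
by rewrite !sum_nat_cond_const -/a -/b; lia.
Qed.

Lemma separated_sum_minn C (D : {set Q}) d :
    (forall y y', y \in C -> y' \in C -> y != y' ->
       d <= #|[set z in D | (z \in F y) != (z \in F y')]|) ->
  d * (#|C| - 1) <=
  2 * \sum_(z in D) minn #|[set y in C | z \notin F y]| #|[set y in C | z \in F y]|.
Proof.
move=> sepC; have [-> | C_gt0] := posnP #|C|; first by rewrite muln0.
set diff := fun y y' z => (z \in F y) != (z \in F y').
have sum_y y : y \in C ->
    (#|C| - 1) * d <= \sum_(y' in C) #|[set z in D | diff y y' z]|.
  move=> yC; rewrite (bigD1 y yC) /=; apply: leq_trans (leq_addl _ _).
  have -> : #|C| - 1 = #|[set y' in C | y' != y]|.
    by rewrite (cardsD1 y C) yC add1n subn1; apply: eq_card => y'; rewrite !inE andbC.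
  by rewrite -sum_nat_cond_const; apply: leq_sum => y' /andP[y'C y'y]; rewrite sepC // eq_sym.
have exch : \sum_(y in C) \sum_(y' in C) #|[set z in D | diff y y' z]| =
            \sum_(z in D) \sum_(y in C) #|[set y' in C | diff y y' z]|.
  under eq_bigr do under eq_bigr do rewrite card_sep_sum.
  under eq_bigr do rewrite exchange_big /=.
  by rewrite exchange_big; apply: eq_bigr => z _; apply: eq_bigr => y _; rewrite card_sep_sum.
rewrite -(leq_pmul2l C_gt0) [d * _]mulnC -sum_nat_const.
apply: leq_trans (leq_sum _ sum_y) _; rewrite exch mulnA big_distrr /=.
apply: leq_sum => z _; rewrite sum_disagree.
have <- : #|[set y in C | z \notin F y]| + #|[set y in C | z \in F y]| = #|C|.
  rewrite addnC -(cardsID [set y | z \in F y] C).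
  by congr (_ + _); apply: eq_card => y; rewrite !inE andbC.
nia.
Qed.

Variable I : {set J}.

Definition trace_class B T := [set y in I | F y :&: B == T].

Definition trace_weight B T := #|trace_class B T|.

Definition ntraces B := #|[set F y :&: B | y in I]|.

Definition linear_traces (R : {set Q}) r :=
  forall B, B \subset R -> 0 < #|B| -> ntraces B <= r * #|B|.

Definition separated d := forall y y', y \in I -> y' \in I -> y != y' ->
  d <= #|(F y :\: F y') :|: (F y' :\: F y)|.

Lemma total_trace_weight B : total_weight B (trace_weight B) = #|I|.
Proof.
rewrite /total_weight -sum1_card (partition_big (fun y => F y :&: B) (mem (powerset B))) /=;
  last by move=> y _; rewrite inE subsetIr.
by apply: eq_bigr => T _; rewrite sum1dep_card.
Qed.

Lemma ntraces_sum B : ntraces B = \sum_(T in powerset B) (0 < trace_weight B T).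
Proof.
rewrite -card_sep_sum; apply: eq_card => T; rewrite !inE.
apply/imsetP/andP => [[y yI ->] | [_ /card_gt0P[y]]]; last first.
  by rewrite !inE => /andP[yI /eqP <-]; exists y.
by rewrite subsetIr; split=> //; apply/card_gt0P; exists y; rewrite !inE yI eqxx.
Qed.

Lemma sum_trace_weight_pred B :
  \sum_(T in powerset B) (trace_weight B T).-1 = #|I| - ntraces B.
Proof.
rewrite ntraces_sum -(total_trace_weight B).
rewrite -[LHS](addnK (\sum_(T in powerset B) (0 < trace_weight B T))).
rewrite -big_split; congr (_ - _).
by apply: eq_bigr => T _ /=; case: trace_weight => // n; rewrite addn1.
Qed.

Lemma pow2_le_ntraces B S : S \subset B ->
  shattered_by (trace_weight B) S -> 2 ^ #|S| <= ntraces S.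
Proof.
move=> sSB shS; rewrite -card_powerset; apply: subset_leq_card; apply/subsetP => U.
rewrite inE => /shS[T /card_gt0P[y]]; rewrite !inE => /andP[yI /eqP <-] <-.
by apply/imsetP; exists y; rewrite // -setIA (setIidPr sSB).
Qed.

Lemma trace_weight_setU1 B T z : z \notin B -> T \subset B ->
  trace_weight (z |: B) T = #|[set y in trace_class B T | z \notin F y]| /\
  trace_weight (z |: B) (z |: T) = #|[set y in trace_class B T | z \in F y]|.
Proof.
move=> zB sTB; have zT : z \notin T by apply: contra zB; apply: (subsetP sTB).
have zFB y : z \notin F y :&: B by rewrite inE negb_and zB orbT.
split; apply: eq_card => y; rewrite !inE setI_setU1; case: (boolP (z \in F y)) => zF /=.
- by case: eqP => [E|]; rewrite ?andbF //; move: zT; rewrite -E setU11.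
- by rewrite andbT.
- rewrite andbT; congr (_ && _); apply/eqP/eqP => [E | -> //].
  by rewrite -(setU1K (zFB y)) E setU1K.
- by rewrite andbF; case: eqP => [E|]; rewrite ?andbF //; move: (zFB y); rewrite E setU11.
Qed.

(* The members of [I] with a common trace [T] on [B] are pairwise [d]-apart on
   [R :\: B], and each point [z] there splits them along the edge [T -- z |: T]. *)
Lemma trace_edge_weight_ge (R B : {set Q}) d :
    (forall y, F y \subset R) -> B \subset R -> separated d ->
  d * (#|I| - ntraces B) <=
  2 * \sum_(z in R :\: B) \sum_(T in powerset B)
        minn (trace_weight (z |: B) T) (trace_weight (z |: B) (z |: T)).
Proof.
move=> FR sBR sepI; rewrite -sum_trace_weight_pred exchange_big !big_distrr /=.
apply: leq_sum => T; rewrite inE => sTB.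
rewrite (eq_bigr (fun z => minn #|[set y in trace_class B T | z \notin F y]|
                                #|[set y in trace_class B T | z \in F y]|)); last first.
  by move=> z; rewrite inE => /andP[zB _]; have [-> ->] := trace_weight_setU1 zB sTB.
rewrite -subn1; apply: separated_sum_minn => y y'.
rewrite !inE => /andP[yI /eqP yT] /andP[y'I /eqP y'T] yy'.
apply: leq_trans (sepI _ _ yI y'I yy') _; apply: subset_leq_card; apply/subsetP => x xD.
have dxy : (x \in F y) != (x \in F y').
  by move: xD; rewrite !inE; case: (x \in F y); case: (x \in F y').
have xR : x \in R by move: xD; rewrite !inE => /orP[] /andP[_ /(subsetP (FR _))].
rewrite !inE dxy xR !andbT; apply: contraTN dxy => xB; rewrite negbK.
by apply/eqP; move/setP/(_ x): (etrans yT (esym y'T)); rewrite !inE xB !andbT.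
Qed.

Lemma trace_edge_weight_le (R B : {set Q}) r :
  linear_traces R r -> B \subset R -> edge_weight B (trace_weight B) <= (r + 3) * #|I|.
Proof.
move=> trR sBR; rewrite -(total_trace_weight B); apply: edge_weight_le => S sSB shS.
have [-> // | S_gt0] := posnP #|S|; apply: le_of_pow2_le_linear.
exact: leq_trans (pow2_le_ntraces sSB shS) (trR _ (subset_trans sSB sBR) S_gt0).
Qed.

End TraceFamily.

Section Draws.
Variables (Q : finType) (R : {set Q}).

Definition draws j := [set B : {set Q} | (B \subset R) && (#|B| == j)].

Lemma sum_draws_succ s (f : {set Q} -> Q -> nat) :
  \sum_(B' in draws s.+1) \sum_(z in B') f B' z =
  \sum_(B in draws s) \sum_(z in R :\: B) f (z |: B) z.
Proof.
rewrite (exchange_big_dep (mem R)) /=; last first.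
  by move=> B' z; rewrite !inE => /andP[sB _] zB; apply: (subsetP sB).
rewrite [RHS](exchange_big_dep (mem R)) /=; last by move=> B z _; rewrite !inE => /andP[].
apply: eq_bigr => z zR.
rewrite (reindex_onto (fun B => z |: B) (fun B' => B' :\ z)) /=; last first.
  by move=> B' /andP[_ zB]; rewrite setD1K.
apply: eq_bigl => B; rewrite !inE; have [zB | zB] /= := boolP (z \in B).
  have /negbTE-> : (z |: B) :\ z != B by apply: contraTneq zB => <-; rewrite !inE eqxx.
  by rewrite !andbF.
by rewrite setU1K // !eqxx cardsU1 zB add1n eqSS subUset sub1set zR /= !andbT.
Qed.

Lemma card_draws_succ s : #|draws s.+1| * s.+1 = #|draws s| * (#|R| - s).
Proof.
have := sum_draws_succ s (fun _ _ => 1).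
rewrite (eq_bigr (fun=> s.+1)) => [|B']; last by rewrite inE sum1_card => /andP[_ /eqP].
rewrite [RHS](eq_bigr (fun=> #|R| - s)) => [|B]; last first.
  by rewrite inE sum1_card => /andP[sBR /eqP cB]; rewrite cardsD (setIidPr sBR) cB.
by rewrite !sum_nat_const.
Qed.

Lemma draws_gt0 s : s <= #|R| -> 0 < #|draws s|.
Proof.
move=> sR; apply/card_gt0P; exists [set x in take s (enum R)]; rewrite !inE.
apply/andP; split; first by apply/subsetP => x; rewrite inE => /mem_take; rewrite mem_enum.
rewrite cardsE (card_uniqP _) ?size_takel -?cardE //.
exact/take_uniq/enum_uniq.
Qed.

End Draws.

Section Packing.
Variables (J Q : finType) (F : J -> {set Q}) (I : {set J}) (R : {set Q}) (r d : nat).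
Hypothesis FR : forall y, F y \subset R.
Hypothesis trR : linear_traces F I R r.
Hypothesis sepI : separated F I d.

(* Average the edge weight of the traces over the (s+1)-subsets [z |: B] of [R]:
   the VC bound caps it by [(r + 3) |I|], [trace_edge_weight_ge] bounds it below. *)
Lemma packing_bound s : 0 < s -> s < #|R| ->
  d * (#|I| - r * s) * s.+1 <= 2 * (r + 3) * #|I| * (#|R| - s).
Proof.
move=> s_gt0 sR.
set E := \sum_(B' in draws R s.+1) edge_weight B' (trace_weight F I B').
have upper : E <= #|draws R s.+1| * ((r + 3) * #|I|).
  rewrite -sum_nat_const; apply: leq_sum => B'; rewrite inE => /andP[sBR _].
  exact: trace_edge_weight_le trR sBR.
have lower : #|draws R s| * (d * (#|I| - r * s)) <= 2 * E.
  rewrite /E /edge_weight sum_draws_succ big_distrr -sum_nat_const /=.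
  apply: leq_sum => B; rewrite inE => /andP[sBR /eqP cB].
  rewrite (eq_bigr (fun z => \sum_(T in powerset B) minn (trace_weight F I (z |: B) T)
                                 (trace_weight F I (z |: B) (z |: T)))); last first.
    by move=> z; rewrite inE => /andP[zB _]; rewrite setU1K.
  apply: leq_trans (trace_edge_weight_ge FR sBR sepI).
  by rewrite leq_mul2l leq_sub2l ?orbT // -cB trR // cB.
rewrite -(leq_pmul2l (draws_gt0 (ltnW sR))) !mulnA -[_ * d * _]mulnA.
apply: leq_trans (leq_mul lower (leqnn s.+1)) _.
apply: leq_trans (leq_mul (leq_mul (leqnn 2) upper) (leqnn s.+1)) _.
have := card_draws_succ R s; set a := #|draws R s|; set b := #|draws R s.+1|.
move=> cnt; apply: eq_leq; transitivity (2 * ((r + 3) * #|I|) * (b * s.+1)); first by nia.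
by rewrite cnt; nia.
Qed.

End Packing.

Definition ncolors r := 16 * (r + 3) ^ 4.

Lemma quartic_lt_ncolors r : 8 * r * r * (2 * r + 1) * (r + 3) < ncolors r.
Proof. by rewrite /ncolors !expnS expn0; nia. Qed.

Lemma linear_lt_ncolors r : 4 * (r + 3) < ncolors r.
Proof. by rewrite /ncolors !expnS expn0; nia. Qed.

Lemma ncolors_gt0 r : 0 < ncolors r.
Proof. by have := linear_lt_ncolors r; lia. Qed.

Lemma separated_family_large (J Q : finType) (F : J -> {set Q}) (I : {set J})
    (R : {set Q}) r :
    (forall y, F y \subset R) -> linear_traces F I R r -> separated F I (ncolors r) ->
  1 < #|I| -> r * (2 * r + 1) * #|I| < #|R|.
Proof.
move=> FR trR sepI /card_gt1P[y [y' [yI y'I yy']]]; rewrite ltnNge; apply/negP => RI.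
have := quartic_lt_ncolors r; have := linear_lt_ncolors r.
set K := ncolors r; set N := #|R|; set M := #|I| => K_lin K_quartic.
have KN : K <= N.
  apply: leq_trans (sepI _ _ yI y'I yy') (subset_leq_card _).
  by rewrite subUset !(subset_trans (subsetDl _ _) (FR _)).
(* At this subset size [packing_bound] forces [M <= 2 r s], which is too small. *)
set a := 4 * (r + 3) * N; set s := a %/ K.
have K_gt0 : 0 < K by lia.
have Ks : K * s <= a by rewrite mulnC leq_divM.
have aKs : a < K * s.+1 by rewrite mulnC ltn_ceil.
have s_gt0 : 0 < s.
  rewrite lt0n; apply/eqP => s0; move: aKs; rewrite s0 muln1 /a.
  by have := leq_mul (leqnn (4 * (r + 3))) KN; lia.
have sN : s < N.
  rewrite -(ltn_pmul2l K_gt0); apply: leq_ltn_trans Ks _.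
  by rewrite /a ltn_pmul2r // (leq_trans K_gt0 KN).
have pack := packing_bound FR trR sepI s_gt0 sN.
have M_le : M <= 2 * r * s.
  set X := M - r * s.
  have pack_s : a * X <= 2 * (r + 3) * M * N.
    apply: leq_trans (leq_mul (ltnW aKs) (leqnn X)) _.
    rewrite mulnAC; apply: leq_trans pack _.
    by rewrite leq_mul2l leq_subr orbT.
  have : 2 * (r + 3) * N * (2 * X) <= 2 * (r + 3) * N * M.
    have -> : 2 * (r + 3) * N * (2 * X) = a * X by rewrite /a; nia.
    by have -> : 2 * (r + 3) * N * M = 2 * (r + 3) * M * N by nia.
  rewrite leq_pmul2l; first by rewrite /X; lia.
  by rewrite !muln_gt0 addn3 (leq_trans K_gt0 KN).
have : K * s <= 8 * r * r * (2 * r + 1) * (r + 3) * s.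
  apply: leq_trans Ks _; have := leq_mul (leqnn (4 * (r + 3))) RI.
  have := leq_mul (leqnn (4 * (r + 3) * (r * (2 * r + 1)))) M_le.
  rewrite /a; lia.
by rewrite leq_pmul2r // leqNgt K_quartic.
Qed.

Section StableSet.
Variables (T : finType) (h : rel T).
Hypotheses (hsym : symmetric h) (hirr : irreflexive h).
Implicit Types (S P : {set T}).

Lemma low_degree_vertex D S : S != set0 ->
    \sum_(y in S) #|[set w in S | h y w]| <= D * #|S| ->
  exists2 y, y \in S & #|[set w in S | h y w]| <= D.
Proof.
move=> S0 sumS; apply/exists_inP; apply: contraLR sumS => /exists_inPn high.
have : \sum_(y in S) D.+1 <= \sum_(y in S) #|[set w in S | h y w]|.
  by apply: leq_sum => y /high; rewrite ltnNge.
rewrite -ltnNge sum_nat_const mulnC; apply: leq_trans.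
by rewrite ltn_pmul2r ?card_gt0.
Qed.

Lemma exists_stable_set D P :
    (forall S, S \subset P -> S != set0 ->
       exists2 y, y \in S & #|[set w in S | h y w]| <= D) ->
  exists2 I : {set T}, I \subset P & {in I &, forall y w, ~~ h y w} /\ #|P| <= D.+1 * #|I|.
Proof.
have [n] := ubnP #|P|; elim: n P => // n IH P cP degP.
have [-> | P0] := eqVneq P set0.
  by exists set0; rewrite ?sub0set ?cards0 //; split=> // y; rewrite inE.
have [y yP ydeg] := degP P (subxx P) P0.
set P' := P :\: (y |: [set w in P | h y w]).
have sP' : P' \subset P by apply: subsetDl.
have yP' : y \notin P' by rewrite !inE eqxx.
have [||I' sI' [stI' cI']] := IH P'.
- suff : #|P'| < #|P| by lia.
  by apply: proper_card; apply/properP; split=> //; exists y.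
- by move=> S sS; apply: degP; apply: subset_trans sS sP'.
exists (y |: I'); first by rewrite subUset sub1set yP (subset_trans sI').
split.
  have yI' w : w \in I' -> ~~ h y w.
    move=> /(subsetP sI'); rewrite !inE.
    by case: (w \in P); case: (h y w); rewrite ?orbT ?andbF ?andbT.
  move=> a b; rewrite !inE => /predU1P[-> | aI] /predU1P[-> | bI]; rewrite ?hirr //.
  - exact: yI'.
  - by rewrite hsym yI'.
  - exact: stI'.
have : #|P| <= #|P'| + D.+1.
  rewrite -(cardsID (y |: [set w in P | h y w]) P) addnC leq_add2l.
  apply: leq_trans (subset_leq_card (subsetIr _ _)) _.
  by rewrite cardsU1; case: (_ \notin _); lia.
by rewrite cardsU1 (contra (subsetP sI' y)) // mulnS; lia.
Qed.

End StableSet.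

Lemma sum_degree_pairs (T : finType) (h : rel T) (S : {set T}) :
  \sum_(y in S) #|[set w in S | h y w]| = #|[set p in setX S S | h p.1 p.2]|.
Proof.
rewrite -sum1dep_card; under eq_bigr do rewrite -sum1dep_card.
by rewrite pair_big_dep /=; apply: eq_bigl => -[y w]; rewrite !inE andbA.
Qed.

Lemma oriented_pair_inj (T : finType) :
  {in [pred p : T * T | p.1 != p.2] &,
    injective (fun p => ([set p.1; p.2], enum_rank p.1 < enum_rank p.2))}.
Proof.
move=> [a b] [a' b']; rewrite !inE /= => ab a'b' [E rk].
have b_in : b \in [set a'; b'] by rewrite -E set22.
have /set2P[aa' | ab'] : a \in [set a'; b'] by rewrite -E set21.
  by case/set2P: b_in => [ba' | ->]; move: ab; rewrite aa' // ba' eqxx.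
case/set2P: b_in => [ba' | bb']; last by move: ab; rewrite ab' bb' eqxx.
move: rk; rewrite ab' ba'; case: ltngtP => // /val_inj/enum_rank_inj ab''.
by move: a'b'; rewrite ab'' eqxx.
Qed.

Lemma exists_transversal (T : finType) (U : eqType) (f : T -> U) :
  exists2 R : {set T}, {in R &, injective f} & forall v, exists2 x, x \in R & f x = f v.
Proof.
exists [set x | [pick y | f y == f x] == Some x] => [a b | v].
  by rewrite !inE => /eqP pa /eqP pb fab; apply: Some_inj; rewrite -pa -pb fab.
have [x fx pick_v] : exists2 x, f x == f v & [pick y | f y == f v] = Some x.
  by case: pickP => [x fx | /(_ v)]; [exists x | rewrite eqxx].
by exists x; rewrite ?inE (eqP fx) ?pick_v.
Qed.

Section OddColoring.
Variables (T : finType) (e : rel T) (k : nat).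
Implicit Types (A B D P : {set T}) (c : T -> 'I_k).

Definition color_count c A (i : 'I_k) := #|[set u in A | c u == i]|.

Definition odd_coloring P c :=
  forall v, nbhd e v :&: P != set0 -> exists i, odd (color_count c (nbhd e v :&: P) i).

Definition separating y w := [set v | (y \in nbhd e v) != (w \in nbhd e v)].

Lemma injective_odd_coloring P c : {in P &, injective c} -> odd_coloring P c.
Proof.
move=> c_inj v /set0Pn[u uNP]; exists (c u); rewrite /color_count.
have -> : [set u' in nbhd e v :&: P | c u' == c u] = [set u].
  apply/setP => u'; rewrite in_set1 [LHS]inE.
  apply/andP/eqP => [[u'NP /eqP cu] | ->]; last by rewrite uNP.
  by apply: c_inj => //; [move: u'NP | move: uNP]; rewrite inE => /andP[].
by rewrite cards1.
Qed.

Lemma exists_injective_coloring P : 0 < k -> #|P| <= k ->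
  exists c, {in P &, injective c}.
Proof.
move=> k_gt0 Pk; have [-> | [x0 x0P]] := set_0Vmem P.
  by exists (fun=> Ordinal k_gt0) => ?; rewrite inE.
exists (fun u => widen_ord Pk (enum_rank_in x0P u)) => u u' uP u'P [/val_inj E].
by rewrite -(enum_rankK_in x0P uP) -(enum_rankK_in x0P u'P) E.
Qed.

Lemma color_count_recolor c a D A B i : [disjoint A & D] -> B \subset D ->
  color_count (fun u => if u \in D then a else c u) (A :|: B) i =
  color_count c A i + (a == i) * #|B|.
Proof.
move=> dAD sBD; rewrite /color_count.
rewrite -(cardsID A [set u in A :|: B | _]); congr (_ + _).
  apply: eq_card => u; rewrite !inE; case: (boolP (u \in A)) => uA; rewrite ?andbF //=.
  by rewrite (disjointFr dAD uA) andbT.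
have -> : [set u in A :|: B | (if u \in D then a else c u) == i] :\: A =
          [set u in B | a == i].
  apply/setP => u; rewrite !inE; case: (boolP (u \in A)) => uA /=.
    case: (boolP (u \in B)) => // /(subsetP sBD) uD.
    by rewrite (disjointFr dAD uA) in uD.
  by case: (boolP (u \in B)) => uB //; rewrite (subsetP sBD u uB).
case: eqP => _; first by rewrite mul1n; apply: eq_card => u; rewrite !inE andbT.
by rewrite mul0n; apply/eqP; rewrite cards_eq0; apply/eqP/setP => u; rewrite !inE andbF.
Qed.

Lemma odd_color_count_recolor c a P y w v i :
    y \in P -> w \in P -> y != w ->
  odd (color_count (fun u => if u \in [set y; w] then a else c u) (nbhd e v :&: P) i) =
  odd (color_count c (nbhd e v :&: (P :\: [set y; w])) i) (+)
    ((a == i) && (v \in separating y w)).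
Proof.
move=> yP wP yw; set D := [set y; w].
rewrite (@setI_splitD _ _ _ D) ?subUset ?sub1set ?yP //.
rewrite color_count_recolor ?subsetIr //; last first.
  by case/subsetDP: (subsetIr (nbhd e v) (P :\: D)).
rewrite oddD oddM card_setI2 // oddD !oddb /separating !inE.
by case: (e v y); case: (e v w).
Qed.

Lemma odd_coloring_extend P y w c : y \in P -> w \in P -> y != w ->
    (forall v, nbhd e v :&: P != [set y; w]) ->
    #|[set nbhd e v :&: P | v in separating y w]| < k ->
    odd_coloring (P :\: [set y; w]) c -> exists c', odd_coloring P c'.
Proof.
move=> yP wP yw no_pair few_traces oddc; set D := [set y; w]; set P' := P :\: D.
have sDP : D \subset P by rewrite subUset !sub1set yP.
have i0 : 'I_k := Ordinal (leq_ltn_trans (leq0n _) few_traces).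
pose odd_color A := odflt i0 [pick i | odd (color_count c (A :&: P') i)].
set traces := [set nbhd e v :&: P | v in separating y w].
have [a a_fresh] : exists a, a \notin [set odd_color A | A in traces].
  have : 0 < #|~: [set odd_color A | A in traces]|.
    rewrite -(ltn_add2l #|[set odd_color A | A in traces]|) addn0 cardsC card_ord.
    exact: leq_ltn_trans (leq_imset_card _ _) few_traces.
  by case/card_gt0P => a; rewrite inE; exists a.
exists (fun u => if u \in D then a else c u) => v NP.
have recolor i := odd_color_count_recolor c a v i yP wP yw.
have [NP'0 | NP'] := eqVneq (nbhd e v :&: P') set0.
  exists a; rewrite recolor NP'0 eqxx /=.
  have -> : color_count c set0 a = 0 by apply: eq_card0 => u; rewrite !inE.
  move: NP (no_pair v); rewrite (setI_splitD _ sDP) -/P' NP'0 set0U => ND0 NDD.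
  have := card_setI2 (nbhd e v) yw; rewrite -/D /separating inE.
  case: (y \in nbhd e v); case: (w \in nbhd e v) => //= card_ND.
    by move: NDD; rewrite eqEcard subsetIr card_ND cards2 yw.
  by move: ND0; rewrite -card_gt0 card_ND.
have [j odd_j] := oddc v NP'.
have [sep | nsep] := boolP (v \in separating y w); last first.
  by exists j; rewrite recolor (negbTE nsep) andbF addbF.
have a_ne : a != odd_color (nbhd e v :&: P).
  by apply: contraNneq a_fresh => ->; apply: imset_f; apply: imset_f.
exists (odd_color (nbhd e v :&: P)); rewrite recolor (negbTE a_ne) addbF.
rewrite /odd_color -setIA (setIidPr (subsetDl _ _)).
by case: pickP => [i //| /(_ j)]; rewrite odd_j.
Qed.

End OddColoring.

Section NearTwins.
Variables (T : finType) (e : rel T) (r : nat).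
Hypothesis esym : symmetric e.
Hypothesis ntraces_le : forall A : {set T}, 0 < #|A| ->
  #|[set nbhd e v :&: A | v : T]| <= r * #|A|.
Implicit Types (P S : {set T}).

Definition trace_pair P y w := (y != w) && [exists v, nbhd e v :&: P == [set y; w]].

Lemma sum_degree_trace_pair P S : S \subset P ->
  \sum_(y in S) #|[set w in S | trace_pair P y w]| <= 2 * r * #|S|.
Proof.
move=> sSP; rewrite sum_degree_pairs.
have [/eqP | S_gt0] := posnP #|S|.
  rewrite cards_eq0 => /eqP->; rewrite cards0 muln0 leqn0 cards_eq0.
  by apply/eqP/setP => -[y w]; rewrite !inE.
(* An ordered pair is recorded by its two-element trace on [S] and an orientation bit. *)
set pairs := [set p in setX S S | _].
have inj : {in pairs &, injective (fun p => ([set p.1; p.2], enum_rank p.1 < enum_rank p.2))}.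
  by apply: sub_in2 (@oriented_pair_inj T) => -[y w]; rewrite !inE => /andP[_ /andP[]].
rewrite -(card_in_imset inj) -mulnA.
apply: leq_trans (_ : _ <= #|setX [set nbhd e v :&: S | v : T] [set: bool]|) _; last first.
  by rewrite cardsX cardsT card_bool mulnC leq_mul2l ntraces_le ?orbT.
apply: subset_leq_card; apply/subsetP => _ /imsetP[[y w] + ->].
rewrite !inE /= => /andP[/andP[yS wS] /andP[_ /existsP[v /eqP NvP]]]; rewrite andbT.
apply/imsetP; exists v => //.
by rewrite -(setIidPr sSP) setIA NvP (setIidPl _) // subUset !sub1set yS.
Qed.

Lemma card_separating_traces P (R : {set T}) y w : y \in P -> w \in P ->
    (forall v, exists2 x, x \in R & nbhd e x :&: P = nbhd e v :&: P) ->
  #|[set nbhd e v :&: P | v in separating e y w]| <=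
  #|(nbhd e y :&: R :\: nbhd e w :&: R) :|: (nbhd e w :&: R :\: nbhd e y :&: R)|.
Proof.
move=> yP wP R_rep.
apply: leq_trans (_ : _ <= #|[set nbhd e x :&: P | x in R :&: separating e y w]|) _.
  apply: subset_leq_card; apply/subsetP => _ /imsetP[v v_sep ->].
  have [x xR Nx] := R_rep v; apply/imsetP; exists x; rewrite // inE xR.
  move/setP: Nx => Nx; move: v_sep; rewrite !inE.
  by move: (Nx y) (Nx w); rewrite !inE yP wP !andbT => -> ->.
apply: leq_trans (leq_imset_card _ _) (subset_leq_card _).
(* by symmetry of [e], [x] separates [y] from [w] iff [y] and [w] disagree on [x] *)
apply/subsetP => x; rewrite !inE ![e _ x]esym.
by case: (x \in R); case: (e x y); case: (e x w).
Qed.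

Lemma near_twins P : ncolors r < #|P| ->
  exists y w, [/\ y \in P, w \in P, y != w,
    forall v, nbhd e v :&: P != [set y; w] &
    #|[set nbhd e v :&: P | v in separating e y w]| < ncolors r].
Proof.
move=> KP; have P_gt0 : 0 < #|P| by apply: leq_ltn_trans KP.
have pair_sym : symmetric (trace_pair P).
  move=> y w; rewrite /trace_pair eq_sym; congr (_ && _).
  by apply: eq_existsb => v; rewrite setUC.
have pair_irr : irreflexive (trace_pair P) by move=> y; rewrite /trace_pair eqxx.
have [I sIP [stI cI]] := exists_stable_set pair_sym pair_irr
  (fun S (sSP : S \subset P) (S0 : S != set0) =>
     low_degree_vertex S0 (sum_degree_trace_pair sSP)).
have [R R_inj R_rep] := exists_transversal (fun v => nbhd e v :&: P).
have cR : #|R| <= r * #|P|.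
  rewrite -(card_in_imset R_inj); apply: leq_trans (ntraces_le P_gt0).
  by apply: subset_leq_card; apply/subsetP => _ /imsetP[x _ ->]; apply: imset_f.
pose F y := nbhd e y :&: R.
have FR y : F y \subset R by apply: subsetIr.
have trR : linear_traces F I R r.
  move=> B sBR B_gt0; apply: leq_trans (ntraces_le B_gt0).
  apply: subset_leq_card; apply/subsetP => _ /imsetP[y _ ->]; apply/imsetP; exists y => //.
  by rewrite -setIA (setIidPr sBR).
have [near | /exists_inPn far] := boolP [exists y in I, exists w in I,
    (y != w) && (#|(F y :\: F w) :|: (F w :\: F y)| < ncolors r)].
  have /exists_inP[y yI /exists_inP[w wI /andP[yw dyw]]] := near.
  have [yP wP] := (subsetP sIP y yI, subsetP sIP w wI).
  exists y, w; split=> //.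
    move=> v; apply: contra (stI y w yI wI) => NvP.
    by rewrite /trace_pair yw; apply/existsP; exists v.
  exact: leq_ltn_trans (card_separating_traces yP wP R_rep) dyw.
have sepI : separated F I (ncolors r).
  move=> y y' yI y'I yy'; rewrite leqNgt.
  by move/exists_inPn: (far y yI) => /(_ y' y'I); rewrite yy'.
have := linear_lt_ncolors r; have [I1 | I2] := leqP #|I| 1; first by nia.
have := separated_family_large FR trR sepI I2.
have := leq_mul (leqnn r) cI; nia.
Qed.

Lemma exists_odd_coloring P : exists c : T -> 'I_(ncolors r), odd_coloring e P c.
Proof.
have [n] := ubnP #|P|; elim: n P => // n IH P cP.
have [Pk | KP] := leqP #|P| (ncolors r).
  have [c c_inj] := exists_injective_coloring (ncolors_gt0 r) Pk.
  by exists c; apply: injective_odd_coloring.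
have [y [w [yP wP yw no_pair few_traces]]] := near_twins KP.
have [|c oddc] := IH (P :\: [set y; w]).
  suff : #|P :\: [set y; w]| < #|P| by lia.
  apply: proper_card; apply/properP; split; first exact: subsetDl.
  by exists y; rewrite // !inE eqxx.
exact: odd_coloring_extend yP wP yw no_pair few_traces oddc.
Qed.

End NearTwins.

Theorem lemma3p2 :
  forall r : nat, exists k : nat,
  forall (T : finType) (e : rel T) (X Y : {set T}),
    simple_graph e -> bipartition e X Y ->
    (forall m : nat, 0 < m -> eta e m <= r * m) ->
    exists c : T -> 'I_k,
      forall v, v \in X -> nbhd e v != set0 ->
        exists i : 'I_k, odd #|[set u in nbhd e v :&: Y | c u == i]|.
Proof.
move=> r; exists (ncolors r) => T e X Y [esym _] [XY0 _ bip] eta_le.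
have ntraces_le (A : {set T}) : 0 < #|A| -> #|[set nbhd e v :&: A | v : T]| <= r * #|A|.
  move=> A_gt0; apply: leq_trans (eta_le _ A_gt0).
  exact: (@leq_bigmax_cond _ (fun B : {set T} => #|B| == #|A|)
            (fun B => #|[set nbhd e v :&: B | v : T]|) A (eqxx _)).
have [c oddc] := exists_odd_coloring esym ntraces_le Y.
exists c => v vX Nv0; apply: oddc.
have -> // : nbhd e v :&: Y = nbhd e v.
apply/setIidPl/subsetP => u; rewrite inE => /bip[[] // | [vY _]].
by move/setP/(_ v): XY0; rewrite !inE vX vY.
Qed.
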